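(* Let $\Delta$ be a finite $4$-valent graph, let $\mathcal{C}$ be a partition of $E\Delta$ into cycles, and let $G\le\mathrm{Aut}(\Delta)$ be arc-transitive and $\mathcal{C}$-invariant, so that $G\le\mathrm{Aut}(\mathrm{s}(\Delta,\mathcal{C}))$ via $(\alpha,C)^g=(\alpha^g,C^g)$. Suppose that $G\le A\le\mathrm{Aut}(\mathrm{s}(\Delta,\mathcal{C}))$, that $A$ is vertex-transitive on $\mathrm{s}(\Delta,\mathcal{C})$, and that for every vertex $v$ of $\mathrm{s}(\Delta,\mathcal{C})$ the group induced by $A_v$ on the neighbourhood of $v$ is cyclic of order $2$. Then $A\le\mathrm{Aut}(\Delta)$; that is, $A$ preserves the set of pairs $\{(\alpha,C),(\alpha,D)\}$ ($\alpha\in V\Delta$, $C\neq D$ the two cycles of $\mathcal{C}$ through $\alpha$), and under the identification of such a pair with $\alpha$, $A$ acts faithfully on $V\Delta$ as a group of automorphisms of $\Delta$.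
   Context: Splitting: for a $4$-valent graph $\Delta$ and a partition $\mathcal{C}$ of $E\Delta$ into cycles (each vertex lies on exactly two cycles of $\mathcal{C}$), $\mathrm{s}(\Delta,\mathcal{C})$ is the cubic graph with vertex set $\{(\alpha,C)\in V\Delta\times\mathcal{C} : \alpha\in VC\}$, where $(\alpha,C)$ and $(\beta,D)$ are adjacent iff either $C\ne D$ and $\alpha=\beta$, or $C=D$ and $\alpha,\beta$ are adjacent in $\Delta$. $G$ is $\mathcal{C}$-invariant if it permutes the cycles of $\mathcal{C}$. $A_v$ denotes the stabilizer of $v$ in $A$. *)

From mathcomp Require Import all_boot all_fingroup all_solvable.
Set Implicit Arguments. Unset Strict Implicit. Unset Printing Implicit Defensive.


Section Graphs.
Variable V : finType.

Definition edges (adj : rel V) : {set {set V}} :=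
  [set e : {set V} | [exists x, exists y, adj x y && (e == [set x; y])]].

Definition vset (C : {set {set V}}) : {set V} :=
  [set x | [exists e in C, x \in e]].

Definition is_cycle (C : {set {set V}}) : bool :=
  [&& C != set0,
      [forall x in vset C, #|[set e in C | x \in e]| == 2] &
      [forall x in vset C, forall y in vset C,
          connect (fun a b => [set a; b] \in C) x y]].

Definition cycle_decomposition (adj : rel V) (CC : {set {set {set V}}}) : Prop :=
  partition CC (edges adj) /\ {in CC, forall C, is_cycle C}.

Definition edge_img (g : {perm V}) (C : {set {set V}}) : {set {set V}} :=
  [set [set g x | x in e] | e : {set V} in C].

Definition is_aut (adj : rel V) (g : {perm V}) : Prop :=
  forall x y, adj (g x) (g y) = adj x y.

(* vertices of the splitting s(Delta, CC): pairs (alpha, C) with alpha in VC *)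
Definition svert (CC : {set {set {set V}}}) :=
  {p : V * {set {set V}} | (p.2 \in CC) && (p.1 \in vset p.2)}.

Definition sadj (CC : {set {set {set V}}}) : rel (svert CC) :=
  fun u w =>
    (((val u).1 == (val w).1) && ((val u).2 != (val w).2))
    || (((val u).2 == (val w).2) && ([set (val u).1; (val w).1] \in (val u).2)).

End Graphs.

Definition is_graph_aut (T : finType) (r : rel T) (a : {perm T}) : Prop :=
  forall x y, r (a x) (a y) = r x y.

From mathcomp Require Import all_boot all_fingroup all_solvable.
Local Open Scope group_scope.
Set Implicit Arguments.
Unset Strict Implicit.
Unset Printing Implicit Defensive.

(* The fibre {(x, C), (x, D)} over a vertex x of Delta is an edge of s(Delta, CC); all other
   edges join consecutive vertices of a cycle.  Arc-transitivity of G yields, for every cycle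
   edge {u, w}, an element of A_u moving w while fixing the fibre partner of u (it fixes x and
   C, hence also D).  Since A_u induces a group of order 2 on the neighbourhood of u, all of
   A_u then fixes the fibre partner of u.  So no a in A can map a fibre edge {u, w} to a cycle
   edge: conjugating by a an element of A_(a u) moving a w would give an element of A_u moving
   w.  Hence A permutes the fibres, the induced permutation of the vertices of Delta maps
   cycle edges to cycle edges, and an element fixing every fibre is trivial because a cycle
   edge at (x, C) determines C. *)

Lemma restr_perm_order2_fix (T : finType) (N : {set T}) (H : {group {perm T}}) h0 x y :
  H \subset 'N(N | 'P) -> #|restr_perm N @* H| = 2 ->
  h0 \in H -> x \in N -> h0 x != x -> y \in N -> h0 y = y ->
  {in H, forall h : {perm T}, h y = y}.
Proof.
move=> nNH card2 h0H xN h0x yN h0y h hH.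
have restrE k z : k \in H -> z \in N -> restr_perm N k z = k z.
  by move=> kH zN; apply: restr_permE (subsetP nNH k kH) zN.
have restr_im k : k \in H -> restr_perm N k \in restr_perm N @* H.
  by move=> kH; apply: mem_morphim (subsetP nNH k kH) kH.
have restr_h0 : restr_perm N h0 != 1.
  by apply: contraNneq h0x => h0_1; rewrite -restrE // h0_1 perm1.
have imH : [set 1; restr_perm N h0] = restr_perm N @* H.
  apply/eqP; rewrite eqEcard cards2 eq_sym restr_h0 card2 leqnn andbT.
  by rewrite subUset !sub1set group1 restr_im.
have := restr_im h hH; rewrite -imH => /set2P[] restr_h.
  by rewrite -(restrE h y) // restr_h perm1.
by rewrite -(restrE h y) // restr_h restrE.
Qed.

Section SimpleGraph.
Variables (V : finType) (adj : rel V).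
Hypotheses (adj_sym : symmetric adj) (adj_irr : irreflexive adj).

Lemma adj_edges x y : adj x y -> [set x; y] \in edges adj.
Proof.
by move=> xy; rewrite inE; apply/existsP; exists x; apply/existsP; exists y; rewrite xy eqxx.
Qed.

Lemma edges_other_end e x :
  e \in edges adj -> x \in e -> exists2 y, adj x y & e = [set x; y].
Proof.
rewrite inE => /existsP[a /existsP[b /andP[ab /eqP->]]] /set2P[]->; first by exists b.
by exists a; [rewrite adj_sym | rewrite setUC].
Qed.

Lemma edges_adj x y : [set x; y] \in edges adj -> adj x y.
Proof.
move=> xyE; have [z xz Exz] := edges_other_end xyE (set21 x y).
have : y \in [set x; z] by rewrite -Exz set22.
case/set2P=> [yx|-> //]; move: Exz; rewrite yx setUid => Exz.
have /set1P zx : z \in [set x] by rewrite Exz set22.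
by move: xz; rewrite zx adj_irr.
Qed.

Lemma vsetP (C : {set {set V}}) x : reflect (exists2 e, e \in C & x \in e) (x \in vset C).
Proof.
rewrite inE; apply: (iffP existsP) => [[e /andP[]]|[e eC xe]]; first by exists e.
by exists e; rewrite eC xe.
Qed.

Lemma mem_vset2l (C : {set {set V}}) x y : [set x; y] \in C -> x \in vset C.
Proof. by move=> xyC; apply/vsetP; exists [set x; y]; rewrite ?set21. Qed.

Lemma mem_vset2r (C : {set {set V}}) x y : [set x; y] \in C -> y \in vset C.
Proof. by move=> xyC; apply/vsetP; exists [set x; y]; rewrite ?set22. Qed.

Lemma edge_img_set2 (g : {perm V}) (C : {set {set V}}) x y :
  [set x; y] \in C -> [set g x; g y] \in edge_img g C.
Proof. by move=> xyC; apply/imsetP; exists [set x; y]; rewrite // imsetU1 imset_set1. Qed.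

Lemma edge_img_vset (g : {perm V}) (C : {set {set V}}) x :
  x \in vset C -> g x \in vset (edge_img g C).
Proof. by case/vsetP=> e eC xe; apply/vsetP; exists [set g y | y in e]; rewrite ?imset_f. Qed.

Lemma edge_img_inj (g : {perm V}) : injective (edge_img g).
Proof. exact: imset_inj (imset_inj (@perm_inj _ g)). Qed.

Section CycleDecomposition.
Variable CC : {set {set {set V}}}.
Hypothesis CCdec : cycle_decomposition adj CC.

Lemma cycle_edge_uniq C D e : C \in CC -> D \in CC -> e \in C -> e \in D -> C = D.
Proof.
case: CCdec => /and3P[_ /trivIsetP CCtriv _] _ CCC DCC eC eD.
apply/eqP; apply: contraT => CD.
by move: (disjointFr (CCtriv _ _ CCC DCC CD) eC); rewrite eD.
Qed.

Lemma cycle_edges C e : C \in CC -> e \in C -> e \in edges adj.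
Proof. by case: CCdec => /and3P[/eqP <- _ _] _ CCC eC; apply/bigcupP; exists C. Qed.

Lemma edges_cycle e : e \in edges adj -> exists2 C, C \in CC & e \in C.
Proof. by case: CCdec => /and3P[/eqP <- _ _] _ /bigcupP[C CCC eC]; exists C. Qed.

Lemma card_cycle_edges_at C x : C \in CC -> x \in vset C -> #|[set e in C | x \in e]| = 2.
Proof.
by move=> CCC xC; case/and3P: (CCdec.2 C CCC) => _ /forallP/(_ x)/implyP/(_ xC)/eqP.
Qed.

Lemma cycle_nbr C x : C \in CC -> x \in vset C -> exists2 y, adj x y & [set x; y] \in C.
Proof.
move=> CCC /vsetP[e eC xe].
have [y xy Ee] := edges_other_end (cycle_edges CCC eC) xe.
by exists y; rewrite -?Ee.
Qed.

Lemma cycle_other_nbr C x y :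
  C \in CC -> [set x; y] \in C -> exists2 z, z != y & [set x; z] \in C.
Proof.
move=> CCC xyC; have := card_cycle_edges_at CCC (mem_vset2l xyC).
rewrite (cardsD1 [set x; y]) inE xyC set21 /= add1n => -[] card1.
have /set0Pn[e] : [set e in C | x \in e] :\ [set x; y] != set0 by rewrite -card_gt0 card1.
rewrite !inE => /and3P[exy eC xe].
have [z _ Ee] := edges_other_end (cycle_edges CCC eC) xe.
by exists z; [apply: contraNneq exy => zy; rewrite Ee zy | rewrite -Ee].
Qed.

Hypothesis adj_deg4 : forall x, #|[set y | adj x y]| = 4.

(* The two cycles through x already account for all four edges at x. *)
Lemma cycles_through_vertex C D D' x :
  C \in CC -> D \in CC -> D' \in CC -> C != D ->
  x \in vset C -> x \in vset D -> x \in vset D' -> D' = C \/ D' = D.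
Proof.
move=> CCC DCC D'CC CD xC xD /vsetP[e eD' xe].
pose at_x (S : {set {set V}}) := [set f in S | x \in f].
have edges_at_x : #|at_x (edges adj)| <= 4.
  rewrite -(adj_deg4 x).
  apply: leq_trans (leq_imset_card (fun y => [set x; y]) [set y | adj x y]).
  apply: subset_leq_card; apply/subsetP=> f; rewrite inE => /andP[fE xf].
  by have [y xy ->] := edges_other_end fE xf; apply/imsetP; exists y; rewrite ?inE.
have CD_at_x : [disjoint at_x C & at_x D].
  rewrite -setI_eq0; apply/set0Pn=> -[f]; rewrite !inE => /andP[/andP[fC _] /andP[fD _]].
  by move/eqP: CD; apply; apply: cycle_edge_uniq fC fD.
have all_at_x : at_x C :|: at_x D = at_x (edges adj).
  have /eqP card_CD : #|at_x C :|: at_x D| == #|at_x C| + #|at_x D|.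
    by rewrite (leq_card_setU (at_x C) (at_x D)).2.
  rewrite (card_cycle_edges_at CCC xC) (card_cycle_edges_at DCC xD) in card_CD.
  apply/eqP; rewrite eqEcard card_CD edges_at_x andbT.
  apply/subsetP=> f /setUP[] /setIdP[fS xf]; apply/setIdP; split=> //.
    exact: cycle_edges CCC fS.
  exact: cycle_edges DCC fS.
have : e \in at_x (edges adj) by rewrite inE xe (cycle_edges D'CC eD').
rewrite -all_at_x !inE xe !andbT => /orP[eC|eD].
  by left; apply: cycle_edge_uniq eD' eC.
by right; apply: cycle_edge_uniq eD' eD.
Qed.

Lemma other_cycle_stable (g : {perm V}) C D x :
  C \in CC -> D \in CC -> C != D -> x \in vset C -> x \in vset D ->
  g x = x -> edge_img g C = C -> edge_img g D \in CC -> edge_img g D = D.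
Proof.
move=> CCC DCC CD xC xD gx gC gDCC.
have xgD : x \in vset (edge_img g D) by rewrite -{1}gx edge_img_vset.
have [gDC|//] := cycles_through_vertex CCC DCC gDCC CD xC xD xgD.
by move/eqP: CD; case; apply: (@edge_img_inj g); rewrite gC gDC.
Qed.

Lemma svert_cycle (u : svert CC) : (val u).2 \in CC.
Proof. by case/andP: (valP u). Qed.

Lemma svert_vset (u : svert CC) : (val u).1 \in vset (val u).2.
Proof. by case/andP: (valP u). Qed.

Lemma svert_eq (u w : svert CC) : (val u).1 = (val w).1 -> (val u).2 = (val w).2 -> u = w.
Proof. by move=> eq1 eq2; apply/val_inj/injective_projections. Qed.

Lemma exists_svert x C : C \in CC -> x \in vset C -> exists u : svert CC, val u = (x, C).
Proof.
move=> CCC xC; have uP : ((x, C).2 \in CC) && ((x, C).1 \in vset (x, C).2) by rewrite CCC xC.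
by exists (exist _ (x, C) uP).
Qed.

Lemma svert_over x : exists u : svert CC, (val u).1 = x.
Proof.
have /set0Pn[y] : [set y | adj x y] != set0 by rewrite -card_gt0 adj_deg4.
rewrite inE => xy; have [C CCC xyC] := edges_cycle (adj_edges xy).
by have [u uE] := exists_svert CCC (mem_vset2l xyC); exists u; rewrite uE.
Qed.

Lemma sadj_fibre (u w : svert CC) : (val u).1 = (val w).1 -> u != w -> sadj u w.
Proof.
move=> eq1 uw; apply/orP; left; rewrite eq1 eqxx /=.
by apply: contraNneq uw => eq2; apply/eqP/svert_eq.
Qed.

Lemma sadj_cycle (u w : svert CC) :
  (val u).2 = (val w).2 -> [set (val u).1; (val w).1] \in (val u).2 -> sadj u w.
Proof. by move=> eq2 uwC; apply/orP; right; rewrite eq2 eqxx -eq2. Qed.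

Lemma sadj_cycle_inv (u w : svert CC) : sadj u w -> (val u).1 != (val w).1 ->
  (val u).2 = (val w).2 /\ [set (val u).1; (val w).1] \in (val u).2.
Proof. by case/orP=> /andP[/eqP eq12 uw2]; [rewrite eq12 eqxx | split=> //; apply/eqP]. Qed.

Lemma svert_cycle_nbr (u : svert CC) :
  exists w : svert CC, sadj u w && ((val u).1 != (val w).1).
Proof.
have [y xy xyC] := cycle_nbr (svert_cycle u) (svert_vset u).
have [w wE] := exists_svert (svert_cycle u) (mem_vset2r xyC).
have uw : sadj u w by apply: sadj_cycle; rewrite wE.
by exists w; rewrite uw wE /=; apply: contraTneq xy => ->; rewrite adj_irr.
Qed.

Lemma sadj_aut_fibrewise_id (a : {perm svert CC}) :
  is_graph_aut (@sadj V CC) a -> (forall u, (val (a u)).1 = (val u).1) -> a = 1.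
Proof.
move=> a_aut a_fib; apply/permP=> u; rewrite perm1.
have [w /andP[uw uw1]] := svert_cycle_nbr u.
have [_ uwC] := sadj_cycle_inv uw uw1.
have auw : sadj (a u) (a w) by rewrite a_aut.
have auw1 : (val (a u)).1 != (val (a w)).1 by rewrite !a_fib.
have [_] := sadj_cycle_inv auw auw1; rewrite !a_fib => auwC.
apply: svert_eq; first exact: a_fib.
exact: cycle_edge_uniq (svert_cycle _) (svert_cycle _) auwC uwC.
Qed.

Section SplittingAutomorphisms.
Variables (G : {group {perm V}}) (A : {group {perm svert CC}}).
Hypothesis G_arc : forall x y x' y', adj x y -> adj x' y' ->
  exists2 g, g \in G & g x = x' /\ g y = y'.
Hypothesis G_inv : {in G, forall g : {perm V}, {in CC, forall C, edge_img g C \in CC}}.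
Hypothesis A_aut : {in A, forall a : {perm svert CC}, is_graph_aut (@sadj V CC) a}.
Hypothesis G_lift : {in G, forall g : {perm V}, exists2 a, a \in A &
  forall u : svert CC, val (a u) = (g (val u).1, edge_img g (val u).2)}.
Hypothesis A_local : forall v : svert CC,
  #|restr_perm [set w | sadj v w] @* 'C_A[v | 'P]| = 2.

Lemma cycle_stab_moves_nbr C x y : C \in CC -> [set x; y] \in C ->
  exists2 g, g \in G & [/\ g x = x, g y != y & edge_img g C = C].
Proof.
move=> CCC xyC; have [z zy xzC] := cycle_other_nbr CCC xyC.
have xy : adj x y := edges_adj (cycle_edges CCC xyC).
have xz : adj x z := edges_adj (cycle_edges CCC xzC).
have [g gG [gx gy]] := G_arc xy xz.
exists g => //; rewrite gx gy; split=> //.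
apply: cycle_edge_uniq (G_inv gG CCC) CCC _ xzC.
by rewrite -{1}gx -gy edge_img_set2.
Qed.

Lemma lift_fixes_fibre g (a : {perm svert CC}) (u : svert CC) : g \in G ->
  (forall w, val (a w) = (g (val w).1, edge_img g (val w).2)) ->
  g (val u).1 = (val u).1 -> edge_img g (val u).2 = (val u).2 ->
  forall w, (val w).1 = (val u).1 -> a w = w.
Proof.
move=> gG a_g gu gC w wu; apply: svert_eq; rewrite a_g; first by rewrite wu gu.
case: (eqVneq (val w).2 (val u).2) => [-> | wuC]; first exact: gC.
apply: other_cycle_stable (svert_cycle u) (svert_cycle w) _ (svert_vset u) _ gu gC _.
- by rewrite eq_sym.
- by rewrite -wu svert_vset.
- exact (G_inv gG (svert_cycle w)).
Qed.

Lemma stab_moves_cycle_nbr (u w : svert CC) : sadj u w -> (val u).1 != (val w).1 ->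
  exists2 a, a \in A & a w != w /\ forall v, (val v).1 = (val u).1 -> a v = v.
Proof.
move=> uw uw1; have [eq2 uwC] := sadj_cycle_inv uw uw1.
have [g gG [gu gw gC]] := cycle_stab_moves_nbr (svert_cycle u) uwC.
have [a aA a_g] := G_lift gG.
exists a => //; split; last exact: lift_fixes_fibre a_g gu gC.
apply: contraNneq gw => aw.
by have := congr1 (fun v => (val v).1) aw; rewrite a_g /= => ->.
Qed.

Lemma stab_normalises_nbhd (v : svert CC) :
  'C_A[v | 'P] \subset 'N([set w | sadj v w] | 'P).
Proof.
apply/subsetP=> a /setIP[aA /astab1P]; rewrite /= apermE => av; apply/astabsP=> w.
by rewrite /= apermE !inE -{1}av A_aut.
Qed.

Lemma stab_fixes_fibre (u w : svert CC) a :
  (val u).1 = (val w).1 -> a \in A -> a u = u -> a w = w.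
Proof.
move=> uw1 aA au; have [<- //|uw] := eqVneq u w.
have [w' /andP[uw' uw'1]] := svert_cycle_nbr u.
have [b bA [bw' b_fib]] := stab_moves_cycle_nbr uw' uw'1.
have stab_u c : c \in A -> c u = u -> c \in 'C_A[u | 'P].
  by move=> cA cu; rewrite inE cA; apply/astab1P; rewrite /= apermE.
apply: (restr_perm_order2_fix (stab_normalises_nbhd u) (A_local u) _ _ bw').
- exact: stab_u b bA (b_fib u erefl).
- by rewrite inE.
- by rewrite inE sadj_fibre.
- exact: b_fib w (esym uw1).
- exact: stab_u a aA au.
Qed.

(* A cycle edge (a u, a w) inside an image fibre would be moved by some b fixing a u, but
   then a * b * a^-1 fixes u without fixing its fibre partner w. *)
Lemma fibres_preserved a : a \in A ->
  forall u w : svert CC, (val u).1 = (val w).1 -> (val (a u)).1 = (val (a w)).1.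
Proof.
move=> aA u w uw1; have [<- //|uw] := eqVneq u w.
apply/eqP; apply: contraT => auw1.
have auw : sadj (a u) (a w) by rewrite A_aut // sadj_fibre.
have [b bA [baw b_fib]] := stab_moves_cycle_nbr auw auw1.
have abaA : a * b * a^-1 \in A by rewrite !groupM ?groupV.
have /(stab_fixes_fibre uw1 abaA) : (a * b * a^-1) u = u by rewrite !permM b_fib // permK.
by rewrite !permM => /(congr1 a); rewrite permKV => baw'; rewrite baw' eqxx in baw.
Qed.

(* The default branch is never taken: every vertex of Delta lies on a cycle (svert_over). *)
Definition fibre_img (a : {perm svert CC}) (x : V) : V :=
  if [pick u : svert CC | (val u).1 == x] is Some u then (val (a u)).1 else x.

Lemma fibre_imgE a u : a \in A -> fibre_img a (val u).1 = (val (a u)).1.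
Proof.
move=> aA; rewrite /fibre_img; case: pickP => [u' /eqP u'u | /(_ u)]; last by rewrite eqxx.
exact: fibres_preserved.
Qed.

Lemma fibre_imgK a : a \in A -> cancel (fibre_img a) (fibre_img a^-1).
Proof.
move=> aA x; have [u <-] := svert_over x.
by rewrite fibre_imgE // fibre_imgE ?groupV // permK.
Qed.

Lemma fibre_img_adj a x y : a \in A -> adj x y -> adj (fibre_img a x) (fibre_img a y).
Proof.
move=> aA xy; have [C CCC xyC] := edges_cycle (adj_edges xy).
have [u uE] := exists_svert CCC (mem_vset2l xyC).
have [w wE] := exists_svert CCC (mem_vset2r xyC).
have auw : sadj (a u) (a w) by rewrite A_aut //; apply: sadj_cycle; rewrite uE wE.
have auw1 : (val (a u)).1 != (val (a w)).1.
  rewrite -!fibre_imgE // (can_eq (fibre_imgK aA)) uE wE /=.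
  by apply: contraTneq xy => ->; rewrite adj_irr.
have [_ auwC] := sadj_cycle_inv auw auw1.
have -> : x = (val u).1 by rewrite uE.
have -> : y = (val w).1 by rewrite wE.
by rewrite !fibre_imgE //; apply: edges_adj (cycle_edges (svert_cycle _) auwC).
Qed.

Lemma fibre_perm_aut a : a \in A ->
  exists f : {perm V}, (forall u : svert CC, (val (a u)).1 = f (val u).1) /\ is_aut adj f.
Proof.
move=> aA; have fK := fibre_imgK aA.
exists (perm (can_inj fK)); split=> [u|x y]; rewrite !permE; first by rewrite fibre_imgE.
apply/idP/idP; last exact: fibre_img_adj.
by move/(fibre_img_adj (groupVr aA)); rewrite !fK.
Qed.

End SplittingAutomorphisms.
End CycleDecomposition.
End SimpleGraph.

Theorem corollary2p10 (V : finType) (adj : rel V) (CC : {set {set {set V}}})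
  (G : {group {perm V}}) (A : {group {perm (svert CC)}}) :
  (* Delta is a finite simple 4-valent graph *)
  symmetric adj -> irreflexive adj ->
  (forall x, #|[set y | adj x y]| = 4) ->
  (* CC is a partition of the edge set into cycles *)
  cycle_decomposition adj CC ->
  (* G <= Aut(Delta), arc-transitive, CC-invariant *)
  {in G, forall g : {perm V}, is_aut adj g} ->
  (forall x y x' y', adj x y -> adj x' y' ->
     exists2 g, g \in G & g x = x' /\ g y = y') ->
  {in G, forall g : {perm V}, {in CC, forall C, edge_img g C \in CC}} ->
  (* A <= Aut(s(Delta,CC)) *)
  {in A, forall a : {perm (svert CC)}, is_graph_aut (@sadj V CC) a} ->
  (* G <= A via (alpha,C)^g = (alpha^g, C^g) *)
  {in G, forall g : {perm V}, exists2 a, a \in A &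
     forall u : svert CC, val (a u) = (g (val u).1, edge_img g (val u).2)} ->
  (* A vertex-transitive on s(Delta,CC) *)
  (forall u w : svert CC, exists2 a, a \in A & a u = w) ->
  (* local action of A_v on the neighbourhood of v is cyclic of order 2 *)
  (forall v : svert CC,
     let Nv := [set w | @sadj V CC v w] in
     cyclic (restr_perm Nv @* 'C_A[v | 'P]) /\
     #|restr_perm Nv @* 'C_A[v | 'P]| = 2) ->
  (* conclusion: A <= Aut(Delta) *)
  (forall a, a \in A -> forall u w : svert CC,
      (val u).1 = (val w).1 -> (val (a u)).1 = (val (a w)).1) /\
  (forall a, a \in A -> exists f : {perm V},
      (forall u : svert CC, (val (a u)).1 = f (val u).1) /\ is_aut adj f) /\
  (forall a, a \in A -> (forall u : svert CC, (val (a u)).1 = (val u).1) ->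
      a = 1%g).
Proof.
move=> adj_sym adj_irr adj_deg4 CCdec _ G_arc G_inv A_aut G_lift _ A_local.
have A_local2 v := (A_local v).2.
split; [|split] => a aA.
- exact (fibres_preserved adj_sym adj_irr CCdec adj_deg4 G_arc G_inv A_aut G_lift A_local2 aA).
- exact (fibre_perm_aut adj_sym adj_irr CCdec adj_deg4 G_arc G_inv A_aut G_lift A_local2 aA).
- exact (sadj_aut_fibrewise_id adj_sym adj_irr CCdec (A_aut a aA)).
Qed.
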